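(* Let $H:\mathbb{R}\to\mathbb{R}$ be a smooth, bounded function with $H(-s)=H(s)\ge 0$ for all $s$, $\int_0^{+\infty} sH(s)\,ds=1$, and such that $H$ either has compact support or $H$ and all its derivatives decay sufficiently fast as $|s|\to\infty$. Let $\zeta:\mathbb{R}\to\mathbb{R}$ be continuous and bounded with $\min_{x\in\mathbb{R}}\zeta(x)=\delta_m>0$, and define $\gamma(s,x)=\zeta(x)^{-2}H(s/\zeta(x))$. Let $\psi_0$ be piecewise continuous and uniformly bounded on $\mathbb{R}$ with a finite number of discontinuities, and let $u=u(x,t)$ be the solution of $$u_t(x,t)+\int_0^{+\infty}\big[u(x,t)-u(x-s,t)\big]\gamma(s,x)\,ds=0,\quad x\in\mathbb{R},\ t>0,\qquad u(x,0)=\psi_0(x).$$ Then for all $t>0$ the function $u(\cdot,t)$ remains piecewise continuous, and its only points of discontinuity are (among) the points of discontinuity of the initial data $\psi_0$.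
   Context: This is a nonlocal analogue of the linear convection equation $u_t+u_x=0$; the integral term is an upwind nonlocal derivative with kernel $\gamma$ and spatially varying horizon parameter $\zeta(x)$, which measures the range of nonlocal interactions. Throughout, the horizon is assumed strictly positive everywhere (fully nonlocal regime). *)

From Stdlib Require Import Reals List.
From Coquelicot Require Import Coquelicot.
Open Scope R_scope.

Definition smooth (f : R -> R) : Prop :=
  forall (n : nat) (x : R), ex_derive_n f n x.

Definition bounded_fun (f : R -> R) : Prop :=
  exists M : R, forall x, Rabs (f x) <= M.

Definition compact_support (f : R -> R) : Prop :=
  exists A : R, forall s, A < Rabs s -> f s = 0.

(* "H and all its derivatives decay sufficiently fast": read as rapid
   (Schwartz-type) decay: |s|^k |H^(n)(s)| is bounded for all n, k. *)
Definition rapid_decay (f : R -> R) : Prop :=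
  forall (n k : nat), exists M : R,
    forall s, Rabs s ^ k * Rabs (Derive_n f n s) <= M.

Definition piecewise_continuous (f : R -> R) : Prop :=
  exists D : list R,
    (forall x, ~ In x D -> continuous f x) /\
    (forall x, In x D ->
       (exists l, filterlim f (at_left x) (locally l)) /\
       (exists l, filterlim f (at_right x) (locally l))).

Definition gamma (H zeta : R -> R) (s x : R) : R :=
  / (zeta x ^ 2) * H (s / zeta x).

Definition is_solution (H zeta psi0 : R -> R) (u : R -> R -> R) : Prop :=
  (forall x, u x 0 = psi0 x) /\
  (forall x, filterlim (fun t => u x t) (at_right 0) (locally (psi0 x))) /\
  (forall T, exists M, forall x t, 0 <= t <= T -> Rabs (u x t) <= M) /\
  (forall x t, 0 < t ->
     exists I : R,
       is_RInt_gen (fun s => (u x t - u (x - s) t) * gamma H zeta s x)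
                   (at_point 0) (Rbar_locally p_infty) I /\
       is_derive (fun tau => u x tau) t (- I)).

From Stdlib Require Import Reals Lra Psatz.
From Coquelicot Require Import Coquelicot.
Open Scope R_scope.

(* Fix t and truncate the kernel at b: with the rate [trunc_rate b x] and the
   convolution [trunc_conv b (u . s) x], the equation becomes
   u_t + trunc_rate b x * u = trunc_conv b (u . s) x up to a tail of size O(1/b),
   since s^2 H(s) is bounded.  Both truncated coefficients depend continuously on x,
   uniformly in time, so for x, x' close to each other w = u(x,.) - u(x',.) solves
   w' + trunc_rate b x * w = (small), and trunc_rate b x >= 0 gives
   |w t| <= |w 0| + (small).  Thus the oscillation of u(., t) near any point is
   bounded by that of psi0 plus an arbitrarily small error, which carries continuity
   and one-sided limits of psi0 over to u(., t). *)

Definition oscillation_dominated (v psi : R -> R) : Prop :=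
  forall x0 e, 0 < e -> exists eta, 0 < eta /\
    forall x x', Rabs (x - x0) < eta -> Rabs (x' - x0) < eta ->
      Rabs (v x - v x') <= e + Rabs (psi x - psi x').

Section OscillationDominated.
Variables v psi : R -> R.
Hypothesis hdom : oscillation_dominated v psi.

Lemma dominated_continuous x0 : continuous psi x0 -> continuous v x0.
Proof.
  intros hpsi. apply filterlim_locally. intros eps.
  destruct (hdom x0 (eps / 2)) as [eta [eta_gt0 hclose]].
  { pose proof (cond_pos eps); lra. }
  pose proof (proj1 (filterlim_locally psi (psi x0)) hpsi (pos_div_2 eps)) as hpsi_near.
  refine (filter_imp _ _ _ (filter_and _ _ (locally_ball x0 (mkposreal _ eta_gt0)) hpsi_near)).
  intros y [hy hpsi_y]. change (Rabs (y - x0) < eta) in hy.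
  change (Rabs (psi y - psi x0) < eps / 2) in hpsi_y. change (Rabs (v y - v x0) < eps).
  specialize (hclose y x0 hy). rewrite Rminus_diag, Rabs_R0 in hclose.
  specialize (hclose eta_gt0). lra.
Qed.

Lemma dominated_filterlim (F : (R -> Prop) -> Prop) {FF : ProperFilter F} x0 l :
  filter_le F (locally x0) -> filterlim psi F (locally l) ->
  exists l', filterlim v F (locally l').
Proof.
  intros hF hpsi. exists (lim (filtermap v F)).
  apply filterlim_locally. intros r.
  apply (complete_cauchy (filtermap v F)); [apply filtermap_proper_filter, FF |].
  intros eps.
  destruct (hdom x0 (eps / 2)) as [eta [eta_gt0 hclose]].
  { pose proof (cond_pos eps); lra. }
  assert (eps4 : 0 < eps / 4) by (pose proof (cond_pos eps); lra).
  pose proof (filter_and _ _ (hF _ (locally_ball x0 (mkposreal _ eta_gt0)))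
    (proj1 (filterlim_locally psi l) hpsi (mkposreal _ eps4))) as hnear.
  destruct (filter_ex _ hnear) as [y0 [hy0 hpsi_y0]].
  exists (v y0). unfold filtermap. refine (filter_imp _ _ _ hnear). intros y [hy hpsi_y].
  change (Rabs (y - x0) < eta) in hy. change (Rabs (y0 - x0) < eta) in hy0.
  change (Rabs (psi y - l) < eps / 4) in hpsi_y.
  change (Rabs (psi y0 - l) < eps / 4) in hpsi_y0. change (Rabs (v y - v y0) < eps).
  assert (Rabs (psi y - psi y0) < eps / 2).
  { apply Rabs_lt_between in hpsi_y. apply Rabs_lt_between in hpsi_y0.
    apply Rabs_def1; lra. }
  specialize (hclose y y0 hy hy0). lra.
Qed.

Lemma dominated_piecewise_continuous :
  piecewise_continuous psi -> piecewise_continuous v.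
Proof.
  intros [D [hcont hjump]]. exists D. split.
  - intros x hx. exact (dominated_continuous x (hcont x hx)).
  - intros x hx. destruct (hjump x hx) as [[l1 hl1] [l2 hl2]]. split.
    + exact (dominated_filterlim (at_left x) x l1 (filter_le_within (F := locally x) _) hl1).
    + exact (dominated_filterlim (at_right x) x l2 (filter_le_within (F := locally x) _) hl2).
Qed.

End OscillationDominated.

Lemma right_limit_MVT (f df : R -> R) t S : 0 < t ->
  (forall s, 0 < s <= t -> is_derive f s (df s)) ->
  (forall s, 0 < s <= t -> Rabs (df s) <= S) ->
  filterlim f (at_right 0) (locally (f 0)) ->
  Rabs (f t - f 0) <= t * S.
Proof.
  intros ht hder hbound hlim.
  assert (S_ge0 : 0 <= S) by (pose proof (Rabs_pos (df t)); pose proof (hbound t); lra).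
  apply Rle_plus_epsilon. intros e he.
  destruct (proj1 (filterlim_locally f (f 0)) hlim (mkposreal e he)) as [d hd].
  set (s0 := Rmin (d / 2) (t / 2)).
  assert (hs0 : 0 < s0 < t /\ s0 < d).
  { pose proof (cond_pos d). assert (0 < s0) by (apply Rmin_glb_lt; lra).
    pose proof (Rmin_l (d / 2) (t / 2)). pose proof (Rmin_r (d / 2) (t / 2)).
    unfold s0 in *. lra. }
  assert (hf_s0 : Rabs (f s0 - f 0) < e).
  { apply (hd s0); [| lra]. change (Rabs (s0 - 0) < d). rewrite Rminus_0_r, Rabs_right; lra. }
  destruct (MVT_gen f s0 t df) as [c [hc hmvt]].
  - intros x hx. rewrite Rmin_left, Rmax_right in hx by lra. apply hder. lra.
  - intros x hx. rewrite Rmin_left, Rmax_right in hx by lra.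
    apply continuity_pt_filterlim, (ex_derive_continuous (V := R_NormedModule)).
    exists (df x). apply hder. lra.
  - rewrite Rmin_left, Rmax_right in hc by lra.
    replace (f t - f 0) with ((f t - f s0) + (f s0 - f 0)) by ring.
    eapply Rle_trans; [apply Rabs_triang |].
    rewrite hmvt, Rabs_mult, (Rabs_right (t - s0)) by lra.
    pose proof (hbound c ltac:(lra)). pose proof (Rabs_pos (df c)). nra.
Qed.

(* The integrating factor [exp (A s)] turns the equation into a derivative bound;
   for [A >= 0] dividing by it at the end costs nothing. *)
Lemma linear_ode_growth (w dw : R -> R) A theta t : 0 < t -> 0 <= A ->
  (forall s, 0 < s <= t -> is_derive w s (dw s)) ->
  (forall s, 0 < s <= t -> Rabs (dw s + A * w s) <= theta) ->
  filterlim w (at_right 0) (locally (w 0)) ->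
  Rabs (w t) <= Rabs (w 0) + t * theta.
Proof.
  intros ht hA hder hbound hlim.
  set (f := fun s => exp (A * s) * w s).
  assert (exp_mono : forall s, s <= t -> exp (A * s) <= exp (A * t)).
  { intros s hs. destruct (Rle_lt_or_eq_dec (A * s) (A * t)) as [hlt | heq]; [nra | |].
    - now apply Rlt_le, exp_increasing.
    - now rewrite heq. }
  assert (hmvt : Rabs (f t - f 0) <= t * (exp (A * t) * theta)).
  { apply (right_limit_MVT f (fun s => exp (A * s) * (dw s + A * w s))); [exact ht | | |].
    - intros s hs. unfold f.
      replace (exp (A * s) * (dw s + A * w s))
        with (A * exp (A * s) * w s + exp (A * s) * dw s) by ring.
      apply (is_derive_mult (fun s => exp (A * s)) w); [| now apply hder | apply Rmult_comm].
      auto_derive; [easy | ring].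
    - intros s hs. rewrite Rabs_mult, Rabs_right by (apply Rle_ge, Rlt_le, exp_pos).
      apply Rmult_le_compat; [apply Rlt_le, exp_pos | apply Rabs_pos | apply exp_mono; lra |].
      now apply hbound.
    - unfold f. apply (filterlim_comp_2 (G := locally (exp (A * 0))) (H := locally (w 0))
        (fun s => exp (A * s)) w Rmult); [| exact hlim | apply (filterlim_mult (K := R_AbsRing))].
      apply (filterlim_filter_le_1 (F := locally 0)); [apply filter_le_within |].
      change (continuous (fun s => exp (A * s)) 0).
      apply (ex_derive_continuous (V := R_NormedModule)). auto_derive. easy. }
  unfold f in hmvt. rewrite Rmult_0_r, exp_0, Rmult_1_l in hmvt.
  pose proof (exp_mono 0 (Rlt_le _ _ ht)) as hE. rewrite Rmult_0_r, exp_0 in hE.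
  assert (hdiv : exp (A * t) * Rabs (w t) <= exp (A * t) * (Rabs (w 0) + t * theta)).
  { rewrite <- (Rabs_right (exp (A * t))) at 1 by lra. rewrite <- Rabs_mult.
    assert (0 <= theta) by (pose proof (Rabs_pos (dw t + A * w t)); pose proof (hbound t); lra).
    pose proof (Rabs_triang_inv (exp (A * t) * w t) (w 0)). pose proof (Rabs_pos (w 0)). nra. }
  apply Rmult_le_reg_l in hdiv; lra.
Qed.

Lemma ex_RInt_sub_interval (f : R -> R) a b c d :
  a <= c -> c <= d -> d <= b -> ex_RInt f a b -> ex_RInt f c d.
Proof.
  intros hac hcd hdb hf. apply (ex_RInt_Chasles_1 f c d b); [lra |].
  apply (ex_RInt_Chasles_2 f a c b); [lra | exact hf].
Qed.

Lemma abs_RInt_le_RInt (f g : R -> R) a b : a <= b -> ex_RInt f a b -> ex_RInt g a b ->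
  (forall x, a < x < b -> Rabs (f x) <= g x) -> Rabs (RInt f a b) <= RInt g a b.
Proof.
  intros hab hf hg hfg.
  assert (hopp : ex_RInt (fun x => - g x) a b) by exact (ex_RInt_opp g a b hg).
  assert (hlow : RInt (fun x => - g x) a b <= RInt f a b).
  { apply RInt_le; auto. intros x hx. specialize (hfg x hx). apply Rabs_le_between in hfg. lra. }
  assert (hup : RInt f a b <= RInt g a b).
  { apply RInt_le; auto. intros x hx. specialize (hfg x hx). apply Rabs_le_between in hfg. lra. }
  assert (RInt (fun x => - g x) a b = - RInt g a b) by exact (RInt_opp g a b hg).
  apply Rabs_le. lra.
Qed.

Lemma is_RInt_inv_sqr C b b' : 0 < b -> b <= b' ->
  is_RInt (fun r => C / (r * r)) b b' (C / b - C / b').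
Proof.
  intros hb hbb'.
  replace (C / b - C / b') with (minus (- C / b') (- C / b))
    by (unfold minus, plus, opp; simpl; field; lra).
  apply (is_RInt_derive (V := R_CompleteNormedModule) (fun r => - C / r));
    intros x hx; rewrite Rmin_left, Rmax_right in hx by lra.
  - auto_derive; [lra | field; lra].
  - apply (ex_derive_continuous (V := R_NormedModule)). auto_derive. nra.
Qed.

Lemma is_RInt_gen_truncations (f : R -> R) I :
  is_RInt_gen f (at_point 0) (Rbar_locally p_infty) I ->
  forall e, 0 < e -> exists B, forall b, B < b -> ex_RInt f 0 b /\ Rabs (RInt f 0 b - I) < e.
Proof.
  intros hI e he.
  destruct (hI _ (locally_ball I (mkposreal e he))) as [P Q hP [B hQ] hPQ].
  exists B. intros b hb.
  destruct (hPQ 0 b hP (hQ b hb)) as [y [hy hyI]]. simpl in hy.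
  split; [now exists y |]. now rewrite (is_RInt_unique _ _ _ _ hy).
Qed.

Lemma is_RInt_gen_ex_RInt (f : R -> R) I b :
  is_RInt_gen f (at_point 0) (Rbar_locally p_infty) I -> 0 <= b -> ex_RInt f 0 b.
Proof.
  intros hI hb. destruct (is_RInt_gen_truncations f I hI 1 Rlt_0_1) as [B hB].
  apply (ex_RInt_sub_interval f 0 (Rmax b B + 1)); try lra.
  - pose proof (Rmax_l b B). lra.
  - apply hB. pose proof (Rmax_r b B). lra.
Qed.

Lemma is_RInt_gen_tail_bound (f : R -> R) I C b : 0 < b ->
  is_RInt_gen f (at_point 0) (Rbar_locally p_infty) I ->
  (forall r, b <= r -> Rabs (f r) <= C / (r * r)) ->
  Rabs (I - RInt f 0 b) <= C / b.
Proof.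
  intros hb hI htail. apply Rle_plus_epsilon. intros e he.
  destruct (is_RInt_gen_truncations f I hI e he) as [B hB].
  set (b' := Rmax b B + 1).
  assert (hbb' : b <= b') by (pose proof (Rmax_l b B); unfold b'; lra).
  destruct (hB b') as [hf hfI]; [pose proof (Rmax_r b B); unfold b'; lra |].
  assert (hf0 : ex_RInt f 0 b) by (apply (ex_RInt_sub_interval f 0 b'); auto; lra).
  assert (hf1 : ex_RInt f b b') by (apply (ex_RInt_sub_interval f 0 b'); auto; lra).
  assert (htail_int : Rabs (RInt f b b') <= C / b - C / b').
  { rewrite <- (is_RInt_unique _ _ _ _ (is_RInt_inv_sqr C b b' hb hbb')).
    apply abs_RInt_le_RInt; auto.
    - eexists. now apply is_RInt_inv_sqr.
    - intros r hr. apply htail. lra. }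
  assert (C_ge0 : 0 <= C / b').
  { pose proof (htail b' hbb') as hC. pose proof (Rabs_pos (f b')).
    assert (0 <= C / (b' * b')) by lra.
    replace (C / b') with (C / (b' * b') * b') by (field; lra). nra. }
  rewrite <- (RInt_Chasles f 0 b b' hf0 hf1) in hfI.
  change (Rabs (RInt f 0 b + RInt f b b' - I) < e) in hfI.
  apply Rabs_lt_between in hfI. apply Rabs_le_between in htail_int. apply Rabs_le. lra.
Qed.

Lemma RInt_overlap_diff (f1 f2 : R -> R) a1 b1 a2 b2 B eps :
  Rmax a1 a2 <= Rmin b1 b2 -> ex_RInt f1 a1 b1 -> ex_RInt f2 a2 b2 ->
  (forall r, Rabs (f1 r) <= B) -> (forall r, Rabs (f2 r) <= B) ->
  (forall r, Rmax a1 a2 <= r <= Rmin b1 b2 -> Rabs (f1 r - f2 r) <= eps) ->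
  Rabs (RInt f1 a1 b1 - RInt f2 a2 b2)
    <= (Rabs (a1 - a2) + Rabs (b1 - b2)) * B + (Rmin b1 b2 - Rmax a1 a2) * eps.
Proof.
  intros hm hf1 hf2 hB1 hB2 hclose.
  set (m1 := Rmax a1 a2) in *. set (m2 := Rmin b1 b2) in *.
  assert (hm1 : a1 <= m1 /\ a2 <= m1) by (split; [apply Rmax_l | apply Rmax_r]).
  assert (hm2 : m2 <= b1 /\ m2 <= b2) by (split; [apply Rmin_l | apply Rmin_r]).
  assert (hlen : (m1 - a1) + (m1 - a2) + (b1 - m2) + (b2 - m2)
                 = Rabs (a1 - a2) + Rabs (b1 - b2)).
  { unfold m1, m2, Rmax, Rmin.
    destruct (Rle_dec a1 a2), (Rle_dec b1 b2);
      rewrite ?(Rabs_left1 (a1 - a2)), ?(Rabs_right (a1 - a2)),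
        ?(Rabs_left1 (b1 - b2)), ?(Rabs_right (b1 - b2)) by lra; lra. }
  assert (hpiece : forall f a b c d, (forall r, Rabs (f r) <= B) -> a <= c -> c <= d -> d <= b ->
            ex_RInt f a b -> Rabs (RInt f c d) <= (d - c) * B).
  { intros f a b c d hB hac hcd hdb hf.
    apply abs_RInt_le_const; auto. now apply (ex_RInt_sub_interval f a b). }
  assert (hsplit : forall f a b, a <= m1 -> m2 <= b -> ex_RInt f a b ->
            RInt f a b = RInt f a m1 + RInt f m1 m2 + RInt f m2 b).
  { intros f a b ha hb hf.
    rewrite <- (RInt_Chasles f a m1 b), <- (RInt_Chasles f m1 m2 b)
      by (apply (ex_RInt_sub_interval f a b); lra || auto).
    change (RInt f a m1 + (RInt f m1 m2 + RInt f m2 b)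
            = RInt f a m1 + RInt f m1 m2 + RInt f m2 b). ring. }
  rewrite (hsplit f1 a1 b1), (hsplit f2 a2 b2) by (lra || auto).
  assert (hf1m : ex_RInt f1 m1 m2) by (apply (ex_RInt_sub_interval _ a1 b1); lra || auto).
  assert (hf2m : ex_RInt f2 m1 m2) by (apply (ex_RInt_sub_interval _ a2 b2); lra || auto).
  assert (hmid : Rabs (RInt f1 m1 m2 - RInt f2 m1 m2) <= (m2 - m1) * eps).
  { assert (hminus : RInt (fun r => f1 r - f2 r) m1 m2 = RInt f1 m1 m2 - RInt f2 m1 m2)
      by exact (RInt_minus (V := R_CompleteNormedModule) f1 f2 m1 m2 hf1m hf2m).
    rewrite <- hminus. apply abs_RInt_le_const; [exact hm | | exact hclose].
    exact (ex_RInt_minus (V := R_NormedModule) f1 f2 m1 m2 hf1m hf2m). }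
  pose proof (hpiece f1 a1 b1 a1 m1 hB1 ltac:(lra) ltac:(lra) ltac:(lra) hf1) as p1.
  pose proof (hpiece f1 a1 b1 m2 b1 hB1 ltac:(lra) ltac:(lra) ltac:(lra) hf1) as p2.
  pose proof (hpiece f2 a2 b2 a2 m1 hB2 ltac:(lra) ltac:(lra) ltac:(lra) hf2) as p3.
  pose proof (hpiece f2 a2 b2 m2 b2 hB2 ltac:(lra) ltac:(lra) ltac:(lra) hf2) as p4.
  apply Rabs_le_between in p1, p2, p3, p4, hmid. apply Rabs_le. nra.
Qed.

Lemma second_moment_bound (H : R -> R) Hb : (forall s, 0 <= H s <= Hb) ->
  compact_support H \/ rapid_decay H -> exists M2, forall s, s * s * H s <= M2.
Proof.
  intros hH [[A hA] | hdecay].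
  - exists (A * A * Hb). intros s. destruct (Rlt_or_le A (Rabs s)) as [hs | hs].
    + rewrite (hA s hs). pose proof (hH 0). nra.
    + apply Rabs_le_between in hs. pose proof (hH s). apply Rmult_le_compat; nra.
  - destruct (hdecay 0%nat 2%nat) as [M hM]. exists M. intros s.
    specialize (hM s). simpl in hM.
    rewrite (Rabs_right (H s)), Rmult_1_r, <- Rabs_mult, Rabs_right in hM
      by (pose proof (hH s); nra).
    exact hM.
Qed.

Section Kernel.
Variables (H zeta : R -> R) (dl Hb M2 : R).
Hypothesis dl_pos : 0 < dl.
Hypothesis zeta_ge : forall x, dl <= zeta x.
Hypothesis H_range : forall s, 0 <= H s <= Hb.
Hypothesis H_second_moment : forall s, s * s * H s <= M2.
Hypothesis H_cont : forall s, continuous H s.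
Hypothesis zeta_cont : forall x, continuous zeta x.

Lemma inv_zeta_range x : 0 < / zeta x <= / dl.
Proof.
  pose proof (zeta_ge x). split; [apply Rinv_0_lt_compat; lra | now apply Rinv_le_contravar].
Qed.

Lemma gamma_scaled s x : gamma H zeta s x = / zeta x * / zeta x * H (s * / zeta x).
Proof. pose proof (zeta_ge x). unfold gamma, Rdiv. f_equal. field. lra. Qed.

Lemma gamma_bounds s x : 0 <= gamma H zeta s x <= Hb / (dl * dl).
Proof.
  rewrite gamma_scaled. pose proof (H_range (s * / zeta x)). pose proof (inv_zeta_range x).
  replace (Hb / (dl * dl)) with (/ dl * / dl * Hb) by (field; lra).
  split; [nra |]. apply Rmult_le_compat; nra.
Qed.

Lemma gamma_tail s x : s <> 0 -> gamma H zeta s x <= M2 / (s * s).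
Proof.
  intros hs. pose proof (zeta_ge x). pose proof (H_second_moment (s / zeta x)).
  assert (0 < s * s) by nra.
  apply (Rmult_le_reg_r (s * s)); [lra |].
  replace (M2 / (s * s) * (s * s)) with M2 by (field; lra).
  replace (gamma H zeta s x * (s * s)) with (s / zeta x * (s / zeta x) * H (s / zeta x));
    [lra | unfold gamma; field; lra].
Qed.

Lemma ex_RInt_gamma x a b : ex_RInt (fun r => gamma H zeta r x) a b.
Proof.
  apply (ex_RInt_continuous (V := R_CompleteNormedModule)). intros r _.
  unfold gamma. apply (continuous_mult (fun _ => / (zeta x ^ 2)) (fun r => H (r / zeta x))).
  - apply continuous_const.
  - apply (continuous_comp (fun r => r / zeta x) H); [| apply H_cont].
    apply (continuous_mult (fun r => r) (fun _ => / zeta x));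
      [apply continuous_id | apply continuous_const].
Qed.

Lemma scaled_profile_diff p q a a' : 0 <= a -> 0 <= a' ->
  Rabs (a * a * H p - a' * a' * H q) <= a * a * Rabs (H p - H q) + Rabs (a - a') * (a + a') * Hb.
Proof.
  intros ha ha'. pose proof (H_range q).
  replace (a * a * H p - a' * a' * H q)
    with (a * a * (H p - H q) + (a - a') * (a + a') * H q) by ring.
  eapply Rle_trans; [apply Rabs_triang |].
  rewrite !Rabs_mult, (Rabs_right a), (Rabs_right (a + a')), (Rabs_right (H q)) by lra.
  pose proof (Rabs_pos (a - a')). apply Rplus_le_compat_l, Rmult_le_compat_l; nra.
Qed.

(* Heine's theorem for [H] on [[-c/dl, c/dl]], which contains every [r a] below. *)
Lemma scaled_profile_uniform_continuity c e : 0 <= c -> 0 < e -> exists delta, 0 < delta /\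
  forall r r' a a', Rabs r <= c -> Rabs r' <= c -> 0 <= a <= / dl -> 0 <= a' <= / dl ->
    Rabs (r - r') < delta -> Rabs (a - a') < delta ->
    Rabs (a * a * H (r * a) - a' * a' * H (r' * a')) <= e.
Proof.
  intros hc he.
  assert (hdl_inv : 0 < / dl) by now apply Rinv_0_lt_compat.
  assert (hHb : 0 <= Hb) by (pose proof (H_range 0); lra).
  assert (heH : 0 < e * (dl * dl) / 2)
    by (apply Rdiv_lt_0_compat; [apply Rmult_lt_0_compat; nra | lra]).
  destruct (Heine H (fun p => - (c / dl) <= p <= c / dl) (compact_P3 _ _)
              (fun p _ => proj2 (continuity_pt_filterlim H p) (H_cont p)) (mkposreal _ heH))
    as [[dH dH_pos] hdH]. simpl in hdH.
  set (delta := Rmin (dH / (2 * (c + / dl))) (e * dl / (4 * (Hb + 1)))).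
  assert (hdelta : delta <= dH / (2 * (c + / dl)) /\ delta <= e * dl / (4 * (Hb + 1)))
    by (split; [apply Rmin_l | apply Rmin_r]).
  exists delta. split; [apply Rmin_glb_lt; apply Rdiv_lt_0_compat; nra |].
  intros r r' a a' hr hr' ha ha' hrr' haa'.
  assert (hrange : forall p b, Rabs p <= c -> 0 <= b <= / dl -> - (c / dl) <= p * b <= c / dl).
  { intros p b hp hb. apply Rabs_le_between. rewrite Rabs_mult, (Rabs_right b) by lra.
    apply Rmult_le_compat; lra || apply Rabs_pos. }
  assert (hclose : Rabs (r * a - r' * a') < dH).
  { replace (r * a - r' * a') with ((r - r') * a + r' * (a - a')) by ring.
    eapply Rle_lt_trans; [apply Rabs_triang |]. rewrite !Rabs_mult, (Rabs_right a) by lra.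
    apply (Rle_lt_trans _ (delta * (c + / dl))).
    - pose proof (Rabs_pos (r - r')). pose proof (Rabs_pos (a - a')). nra.
    - apply (Rle_lt_trans _ (dH / (2 * (c + / dl)) * (c + / dl))); [apply Rmult_le_compat_r; lra |].
      remember (c + / dl) as k. replace (dH / (2 * k) * k) with (dH / 2) by (field; lra). lra. }
  pose proof (hdH _ _ (hrange r a hr ha) (hrange r' a' hr' ha') hclose) as hH.
  eapply Rle_trans; [apply scaled_profile_diff; lra |].
  assert (a * a * Rabs (H (r * a) - H (r' * a')) <= e / 2).
  { replace (e / 2) with (/ dl * / dl * (e * (dl * dl) / 2)) by (field; lra).
    apply Rmult_le_compat; [nra | apply Rabs_pos | apply Rmult_le_compat; lra | lra]. }
  assert (Rabs (a - a') * (a + a') * Hb <= e / 2).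
  { apply (Rle_trans _ (e * dl / (4 * (Hb + 1)) * (2 * / dl) * (Hb + 1))).
    - apply Rmult_le_compat; [pose proof (Rabs_pos (a - a')); nra | lra | | lra].
      apply Rmult_le_compat; lra || apply Rabs_pos.
    - right. field. lra. }
  lra.
Qed.

Lemma gamma_shift_close b x0 e : 0 <= b -> 0 < e -> exists eta, 0 < eta /\
  forall x d s, Rabs (x - x0) < eta -> Rabs d < eta -> 0 <= s <= b ->
    Rabs (gamma H zeta (s + d) x - gamma H zeta s x0) <= e.
Proof.
  intros hb he.
  destruct (scaled_profile_uniform_continuity (b + 1) e ltac:(lra) he) as [delta [hdelta hunif]].
  assert (hinv_cont : continuous (fun x => / zeta x) x0).
  { apply continuity_pt_filterlim, continuity_pt_inv.
    - apply continuity_pt_filterlim, zeta_cont.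
    - pose proof (zeta_ge x0). lra. }
  destruct (proj1 (filterlim_locally _ _) hinv_cont (mkposreal _ hdelta)) as [[ez ez_pos] hez].
  set (eta := Rmin (Rmin delta 1) ez).
  assert (heta : eta <= delta /\ eta <= 1 /\ eta <= ez).
  { unfold eta. pose proof (Rmin_l (Rmin delta 1) ez). pose proof (Rmin_r (Rmin delta 1) ez).
    pose proof (Rmin_l delta 1). pose proof (Rmin_r delta 1). lra. }
  exists eta. split; [unfold eta; repeat apply Rmin_glb_lt; lra |].
  intros x d s hx hd hs.
  pose proof (inv_zeta_range x). pose proof (inv_zeta_range x0).
  rewrite !gamma_scaled. apply hunif; try lra.
  - apply Rabs_lt_between in hd. apply Rabs_le. lra.
  - apply Rabs_le. lra.
  - replace (s + d - s) with d by ring. lra.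
  - apply (hez x). change (Rabs (x - x0) < ez). lra.
Qed.

Definition trunc_rate b x := RInt (fun s => gamma H zeta s x) 0 b.

Lemma trunc_rate_ge0 b x : 0 <= b -> 0 <= trunc_rate b x.
Proof.
  intros hb. apply RInt_ge_0; [exact hb | apply ex_RInt_gamma |].
  intros s _. apply gamma_bounds.
Qed.

Lemma trunc_rate_continuous b x0 : 0 <= b -> continuous (trunc_rate b) x0.
Proof.
  intros hb. apply filterlim_locally. intros eps.
  assert (he : 0 < eps / (2 * (b + 1))) by (pose proof (cond_pos eps); apply Rdiv_lt_0_compat; lra).
  destruct (gamma_shift_close b x0 _ hb he) as [eta [heta hclose]].
  exists (mkposreal _ heta). intros x hx. change (Rabs (x - x0) < eta) in hx.
  change (Rabs (trunc_rate b x - trunc_rate b x0) < eps). unfold trunc_rate.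
  assert (hdiff : RInt (fun s => gamma H zeta s x - gamma H zeta s x0) 0 b
                  = RInt (fun s => gamma H zeta s x) 0 b - RInt (fun s => gamma H zeta s x0) 0 b)
    by exact (RInt_minus (V := R_CompleteNormedModule) _ _ 0 b
                (ex_RInt_gamma x 0 b) (ex_RInt_gamma x0 0 b)).
  rewrite <- hdiff.
  eapply Rle_lt_trans; [apply abs_RInt_le_const; [exact hb | | ] |].
  - exact (ex_RInt_minus (V := R_NormedModule) _ _ 0 b
             (ex_RInt_gamma x 0 b) (ex_RInt_gamma x0 0 b)).
  - intros s hs. pose proof (hclose x 0 s hx ltac:(rewrite Rabs_R0; lra) hs) as h.
    rewrite Rplus_0_r in h. exact h.
  - replace ((b - 0) * (eps / (2 * (b + 1)))) with (eps / 2 * (b / (b + 1))) by (field; lra).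
    assert (b / (b + 1) <= 1).
    { apply (Rmult_le_reg_r (b + 1)); [lra |]. unfold Rdiv.
      rewrite Rmult_assoc, Rinv_l by lra. lra. }
    pose proof (cond_pos eps). nra.
Qed.

Definition trunc_conv b (f : R -> R) x := RInt (fun r => f (x - r) * gamma H zeta r x) 0 b.

Lemma trunc_conv_shift b (f : R -> R) x0 d :
  ex_RInt (fun r => f (x0 + d - r) * gamma H zeta r (x0 + d)) 0 b ->
  ex_RInt (fun r => f (x0 - r) * gamma H zeta (r + d) (x0 + d)) (- d) (b - d) /\
  trunc_conv b f (x0 + d)
    = RInt (fun r => f (x0 - r) * gamma H zeta (r + d) (x0 + d)) (- d) (b - d).
Proof.
  intros hf.
  set (phi := fun r => f (x0 + d - r) * gamma H zeta r (x0 + d)).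
  assert (hphi : ex_RInt phi (1 * (- d) + d) (1 * (b - d) + d)).
  { replace (1 * (- d) + d) with 0 by ring. now replace (1 * (b - d) + d) with b by ring. }
  assert (hcomp : forall r, scal 1 (phi (1 * r + d)) = f (x0 - r) * gamma H zeta (r + d) (x0 + d)).
  { intros r. change (1 * phi (1 * r + d) = f (x0 - r) * gamma H zeta (r + d) (x0 + d)).
    unfold phi. replace (x0 + d - (1 * r + d)) with (x0 - r) by ring.
    replace (1 * r + d) with (r + d) by ring. ring. }
  split.
  - apply (ex_RInt_ext (fun r => scal 1 (phi (1 * r + d)))); [intros r _; apply hcomp |].
    exact (ex_RInt_comp_lin (V := R_NormedModule) phi 1 d (- d) (b - d) hphi).
  - pose proof (RInt_comp_lin (V := R_CompleteNormedModule) phi 1 d (- d) (b - d) hphi) as hchange.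
    replace (1 * (- d) + d) with 0 in hchange by ring.
    replace (1 * (b - d) + d) with b in hchange by ring.
    change (RInt phi 0 b
            = RInt (fun r => f (x0 - r) * gamma H zeta (r + d) (x0 + d)) (- d) (b - d)).
    rewrite <- hchange. apply RInt_ext. intros r _. apply hcomp.
Qed.

Lemma trunc_conv_shift_diff b Mu (f : R -> R) x0 d eps : Rabs d <= b ->
  (forall y, Rabs (f y) <= Mu) ->
  ex_RInt (fun r => f (x0 + d - r) * gamma H zeta r (x0 + d)) 0 b ->
  ex_RInt (fun r => f (x0 - r) * gamma H zeta r x0) 0 b ->
  (forall s, 0 <= s <= b -> Rabs (gamma H zeta (s + d) (x0 + d) - gamma H zeta s x0) <= eps) ->
  Rabs (trunc_conv b f (x0 + d) - trunc_conv b f x0)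
    <= 2 * Rabs d * (Mu * (Hb / (dl * dl))) + b * (Mu * eps).
Proof.
  intros hd hf hint hint0 hclose.
  destruct (trunc_conv_shift b f x0 d hint) as [hint1 ->].
  assert (hfg : forall y r z, Rabs (f y * gamma H zeta r z) <= Mu * (Hb / (dl * dl))).
  { intros y r z. rewrite Rabs_mult, (Rabs_right (gamma H zeta r z)) by apply Rle_ge, gamma_bounds.
    apply Rmult_le_compat; [apply Rabs_pos | apply gamma_bounds | apply hf | apply gamma_bounds]. }
  assert (hmu_eps : 0 <= Mu * eps).
  { pose proof (Rabs_pos d).
    apply Rmult_le_pos; eapply Rle_trans; [apply Rabs_pos | apply (hf 0) | apply Rabs_pos |].
    apply (hclose 0). lra. }
  apply Rabs_le_between in hd.
  assert (hmax : 0 <= Rmax (- d) 0) by apply Rmax_r.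
  assert (hmin : Rmin (b - d) b <= b) by apply Rmin_r.
  assert (hover : Rmax (- d) 0 <= Rmin (b - d) b) by (apply Rmax_lub; apply Rmin_glb; lra).
  eapply Rle_trans.
  { apply (RInt_overlap_diff _ _ (- d) (b - d) 0 b (Mu * (Hb / (dl * dl))) (Mu * eps)
             hover hint1 hint0); [intros; apply hfg | intros; apply hfg |].
    intros r hr.
    replace (f (x0 - r) * gamma H zeta (r + d) (x0 + d) - f (x0 - r) * gamma H zeta r x0)
      with (f (x0 - r) * (gamma H zeta (r + d) (x0 + d) - gamma H zeta r x0)) by ring.
    rewrite Rabs_mult. apply Rmult_le_compat; [apply Rabs_pos | apply Rabs_pos | apply hf |].
    apply hclose. lra. }
  replace (Rabs (- d - 0) + Rabs (b - d - b)) with (2 * Rabs d)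
    by (replace (b - d - b) with (- d) by ring; rewrite Rminus_0_r, Rabs_Ropp; ring).
  apply Rplus_le_compat_l, Rmult_le_compat_r; lra.
Qed.

Lemma trunc_conv_equicontinuous b Mu x0 e : 0 < b -> 0 <= Mu -> 0 < e ->
  locally x0 (fun x => forall f : R -> R, (forall y, Rabs (f y) <= Mu) ->
    (forall z, ex_RInt (fun r => f (z - r) * gamma H zeta r z) 0 b) ->
    Rabs (trunc_conv b f x - trunc_conv b f x0) <= e).
Proof.
  intros hb hMu he.
  set (G := Hb / (dl * dl)).
  assert (hG : 0 <= G) by (pose proof (gamma_bounds 0 0); unfold G; lra).
  assert (heps : 0 < e / (2 * b * (Mu + 1))) by (apply Rdiv_lt_0_compat; nra).
  destruct (gamma_shift_close b x0 _ (Rlt_le _ _ hb) heps) as [eta [heta hclose]].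
  assert (hd_small : 0 < e / (4 * (Mu * G + 1))) by (apply Rdiv_lt_0_compat; nra).
  apply (filter_imp (fun x => (Rabs (x - x0) < eta /\ Rabs (x - x0) < b)
                              /\ Rabs (x - x0) < e / (4 * (Mu * G + 1)))).
  2: { repeat apply filter_and;
        [exact (locally_ball x0 (mkposreal _ heta)) | exact (locally_ball x0 (mkposreal _ hb))
        | exact (locally_ball x0 (mkposreal _ hd_small))]. }
  intros x [[hx hxb] hxe] f hf hint.
  replace x with (x0 + (x - x0)) by ring.
  eapply Rle_trans.
  { apply (trunc_conv_shift_diff b Mu f x0 (x - x0)); [lra | exact hf | apply hint | apply hint |].
    intros s hs. apply hclose; [replace (x0 + (x - x0) - x0) with (x - x0) by ring | |];
      assumption. }
  assert (2 * Rabs (x - x0) * (Mu * G) <= e / 2).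
  { apply (Rle_trans _ (2 * (e / (4 * (Mu * G + 1))) * (Mu * G + 1))).
    - pose proof (Rabs_pos (x - x0)). apply Rmult_le_compat; nra.
    - right. field. nra. }
  assert (b * (Mu * (e / (2 * b * (Mu + 1)))) <= e / 2).
  { replace (b * (Mu * (e / (2 * b * (Mu + 1))))) with (e / 2 * (Mu / (Mu + 1))) by (field; lra).
    assert (Mu / (Mu + 1) <= 1).
    { apply (Rmult_le_reg_r (Mu + 1)); [lra |]. unfold Rdiv.
      rewrite Rmult_assoc, Rinv_l by lra. lra. }
    nra. }
  fold G. lra.
Qed.

Section Solution.
Variables (u : R -> R -> R) (psi0 : R -> R) (t Mu : R).
Hypothesis t_pos : 0 < t.
Hypothesis u_bound : forall x s, 0 <= s <= t -> Rabs (u x s) <= Mu.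
Hypothesis u_init : forall x, u x 0 = psi0 x.
Hypothesis u_right : forall x, filterlim (fun s => u x s) (at_right 0) (locally (psi0 x)).
Hypothesis u_eq : forall x s, 0 < s -> exists I,
  is_RInt_gen (fun r => (u x s - u (x - r) s) * gamma H zeta r x)
              (at_point 0) (Rbar_locally p_infty) I /\
  is_derive (fun tau => u x tau) s (- I).

Lemma Mu_ge0 : 0 <= Mu.
Proof. pose proof (u_bound 0 0). pose proof (Rabs_pos (u 0 0)). lra. Qed.

Lemma ex_RInt_profile x s b : 0 < s -> 0 <= b ->
  ex_RInt (fun r => u (x - r) s * gamma H zeta r x) 0 b.
Proof.
  intros hs hb. destruct (u_eq x s hs) as [I [hI _]].
  apply (ex_RInt_ext (V := R_NormedModule)
           (fun r => u x s * gamma H zeta r x - (u x s - u (x - r) s) * gamma H zeta r x));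
    [intros r _; simpl; ring |].
  apply (ex_RInt_minus (V := R_NormedModule)).
  - apply (ex_RInt_scal (fun r => gamma H zeta r x)), ex_RInt_gamma.
  - exact (is_RInt_gen_ex_RInt _ I b hI hb).
Qed.

Lemma truncated_flux x s b : 0 < s -> 0 <= b ->
  RInt (fun r => (u x s - u (x - r) s) * gamma H zeta r x) 0 b
    = trunc_rate b x * u x s - trunc_conv b (fun y => u y s) x.
Proof.
  intros hs hb.
  assert (hrate : ex_RInt (fun r => u x s * gamma H zeta r x) 0 b)
    by apply (ex_RInt_scal (fun r => gamma H zeta r x)), ex_RInt_gamma.
  assert (hext : RInt (fun r => (u x s - u (x - r) s) * gamma H zeta r x) 0 b
                 = RInt (fun r => u x s * gamma H zeta r x - u (x - r) s * gamma H zeta r x) 0 b)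
    by (apply RInt_ext; intros r _; apply Rmult_minus_distr_r).
  assert (hminus : RInt (fun r => u x s * gamma H zeta r x - u (x - r) s * gamma H zeta r x) 0 b
                   = RInt (fun r => u x s * gamma H zeta r x) 0 b
                     - RInt (fun r => u (x - r) s * gamma H zeta r x) 0 b)
    by exact (RInt_minus (V := R_CompleteNormedModule) _ _ 0 b hrate (ex_RInt_profile x s b hs hb)).
  assert (hscal : RInt (fun r => u x s * gamma H zeta r x) 0 b = u x s * trunc_rate b x)
    by exact (RInt_scal (V := R_CompleteNormedModule) (fun r => gamma H zeta r x) 0 b (u x s)
                (ex_RInt_gamma x 0 b)).
  rewrite hext, hminus, hscal. f_equal. apply Rmult_comm.
Qed.

Lemma truncated_equation x s b : 0 < s <= t -> 0 < b ->
  Rabs (Derive (fun tau => u x tau) s + trunc_rate b x * u x s - trunc_conv b (fun y => u y s) x)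
    <= 2 * Mu * M2 / b.
Proof.
  intros hs hb. destruct (u_eq x s ltac:(lra)) as [I [hI hder]].
  replace (Derive (fun tau => u x tau) s) with (- I)
    by (symmetry; exact (is_derive_unique _ _ _ hder)).
  replace (- I + trunc_rate b x * u x s - trunc_conv b (fun y => u y s) x)
    with (- (I - RInt (fun r => (u x s - u (x - r) s) * gamma H zeta r x) 0 b))
    by (rewrite truncated_flux by lra; ring).
  rewrite Rabs_Ropp. apply (is_RInt_gen_tail_bound _ I _ b hb hI).
  intros r hr. rewrite Rabs_mult, (Rabs_right (gamma H zeta r x)) by apply Rle_ge, gamma_bounds.
  replace (2 * Mu * M2 / (r * r)) with (2 * Mu * (M2 / (r * r))) by (field; lra).
  apply Rmult_le_compat; [apply Rabs_pos | apply gamma_bounds | | apply gamma_tail; lra].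
  replace (u x s - u (x - r) s) with (u x s + - u (x - r) s) by ring.
  eapply Rle_trans; [apply Rabs_triang |]. rewrite Rabs_Ropp.
  pose proof (u_bound x s ltac:(lra)). pose proof (u_bound (x - r) s ltac:(lra)). lra.
Qed.

Lemma difference_equation x x' s b : 0 < s <= t -> 0 < b ->
  Rabs (Derive (fun tau => u x tau) s - Derive (fun tau => u x' tau) s
        + trunc_rate b x * (u x s - u x' s))
    <= 4 * Mu * M2 / b + Rabs (trunc_rate b x - trunc_rate b x') * Mu
       + Rabs (trunc_conv b (fun y => u y s) x - trunc_conv b (fun y => u y s) x').
Proof.
  intros hs hb.
  pose proof (truncated_equation x s b hs hb) as hx.
  pose proof (truncated_equation x' s b hs hb) as hx'.
  set (D := Derive (fun tau => u x tau) s) in *. set (D' := Derive (fun tau => u x' tau) s) in *.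
  set (A := trunc_rate b x) in *. set (A' := trunc_rate b x') in *.
  set (K := trunc_conv b (fun y => u y s) x) in *.
  set (K' := trunc_conv b (fun y => u y s) x') in *.
  replace (D - D' + A * (u x s - u x' s))
    with ((D + A * u x s - K) - (D' + A' * u x' s - K') + (A' - A) * u x' s + (K - K')) by ring.
  assert (hcoef : Rabs ((A' - A) * u x' s) <= Rabs (A - A') * Mu).
  { rewrite Rabs_mult, Rabs_minus_sym.
    apply Rmult_le_compat_l; [apply Rabs_pos | apply u_bound; lra]. }
  apply Rabs_le_between in hx, hx', hcoef.
  pose proof (RRle_abs (K - K')). pose proof (Rabs_maj2 (K - K')).
  replace (4 * Mu * M2 / b) with (2 * Mu * M2 / b + 2 * Mu * M2 / b) by (field; lra).
  apply Rabs_le. lra.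
Qed.

Lemma solution_is_derive x s : 0 < s ->
  is_derive (fun tau => u x tau) s (Derive (fun tau => u x tau) s).
Proof.
  intros hs. destruct (u_eq x s hs) as [I [_ hder]].
  replace (Derive (fun tau => u x tau) s) with (- I)
    by (symmetry; exact (is_derive_unique _ _ _ hder)).
  exact hder.
Qed.

Lemma solution_difference_bound x x' b theta : 0 < b ->
  (forall s, 0 < s <= t ->
     Rabs (trunc_rate b x - trunc_rate b x') * Mu
     + Rabs (trunc_conv b (fun y => u y s) x - trunc_conv b (fun y => u y s) x') <= theta) ->
  Rabs (u x t - u x' t) <= Rabs (psi0 x - psi0 x') + t * (4 * Mu * M2 / b + theta).
Proof.
  intros hb hcoef.
  pose proof (linear_ode_growth (fun s => u x s - u x' s)
    (fun s => Derive (fun tau => u x tau) s - Derive (fun tau => u x' tau) s)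
    (trunc_rate b x) (4 * Mu * M2 / b + theta) t t_pos (trunc_rate_ge0 b x ltac:(lra))) as hode.
  simpl in hode. rewrite !u_init in hode. apply hode.
  - intros s hs. apply (is_derive_minus (fun tau => u x tau) (fun tau => u x' tau));
      apply solution_is_derive; lra.
  - intros s hs. eapply Rle_trans; [apply difference_equation; lra |].
    pose proof (hcoef s hs). lra.
  - apply (filterlim_comp_2 (G := locally (psi0 x)) (H := locally (- psi0 x'))
             (fun s => u x s) (fun s => - u x' s) Rplus); [apply u_right | |].
    + eapply filterlim_comp; [apply u_right | apply (filterlim_opp (V := R_NormedModule))].
    + exact (filterlim_plus (V := R_NormedModule) (psi0 x) (- psi0 x')).
Qed.

Lemma solution_oscillation_dominated : oscillation_dominated (fun x => u x t) psi0.
Proof.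
  intros x0 e he.
  pose proof Mu_ge0 as hMu.
  assert (hM2 : 0 <= M2) by (pose proof (H_second_moment 0); lra).
  set (b := Rmax 1 (8 * t * Mu * M2 / e)).
  assert (hb : 1 <= b) by apply Rmax_l.
  assert (hb0 : 0 < b) by lra.
  assert (htrunc : t * (4 * Mu * M2 / b) <= e / 2).
  { assert (hb8 : 8 * t * Mu * M2 / e <= b) by apply Rmax_r.
    replace (t * (4 * Mu * M2 / b)) with (8 * t * Mu * M2 / e * (e / (2 * b))) by (field; lra).
    replace (e / 2) with (b * (e / (2 * b))) by (field; lra).
    apply Rmult_le_compat_r; [apply Rlt_le, Rdiv_lt_0_compat |]; lra. }
  set (th := e / (2 * t)).
  assert (hth : 0 < th) by (apply Rdiv_lt_0_compat; lra).
  assert (hth_rate : 0 < th / (4 * (Mu + 1))) by (apply Rdiv_lt_0_compat; lra).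
  destruct (filter_and _ _
              (proj1 (filterlim_locally _ _) (trunc_rate_continuous b x0 (Rlt_le _ _ hb0))
                 (mkposreal _ hth_rate))
              (trunc_conv_equicontinuous b Mu x0 (th / 4) hb0 hMu ltac:(lra)))
    as [[eta heta] hnear].
  exists eta. split; [exact heta |]. intros x x' hx hx'.
  destruct (hnear x hx) as [hrate_x hconv_x]. destruct (hnear x' hx') as [hrate_x' hconv_x'].
  change (Rabs (trunc_rate b x - trunc_rate b x0) < th / (4 * (Mu + 1))) in hrate_x.
  change (Rabs (trunc_rate b x' - trunc_rate b x0) < th / (4 * (Mu + 1))) in hrate_x'.
  enough (hgoal : Rabs (u x t - u x' t) <= Rabs (psi0 x - psi0 x') + t * (4 * Mu * M2 / b + th)).
  { assert (t * th = e / 2) by (unfold th; field; lra).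
    rewrite Rmult_plus_distr_l in hgoal. lra. }
  apply (solution_difference_bound x x' b th hb0). intros s hs.
  assert (hbound_s : forall y, Rabs (u y s) <= Mu) by (intros y; apply u_bound; lra).
  assert (hint_s : forall z, ex_RInt (fun r => u (z - r) s * gamma H zeta r z) 0 b)
    by (intros z; apply ex_RInt_profile; lra).
  pose proof (hconv_x _ hbound_s hint_s) as hcx. pose proof (hconv_x' _ hbound_s hint_s) as hcx'.
  apply Rabs_lt_between in hrate_x, hrate_x'. apply Rabs_le_between in hcx, hcx'.
  assert (Rabs (trunc_rate b x - trunc_rate b x') * Mu <= th / 2).
  { assert (th / (2 * (Mu + 1)) = 2 * (th / (4 * (Mu + 1)))) by (field; lra).
    apply (Rle_trans _ (th / (2 * (Mu + 1)) * (Mu + 1))); [| right; field; lra].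
    apply Rmult_le_compat; [apply Rabs_pos | lra | apply Rabs_le; lra | lra]. }
  assert (Rabs (trunc_conv b (fun z => u z s) x - trunc_conv b (fun z => u z s) x') <= th / 2)
    by (apply Rabs_le; lra).
  lra.
Qed.

End Solution.

End Kernel.

Theorem corollary1 (H zeta psi0 : R -> R) (u : R -> R -> R) :
  smooth H ->
  bounded_fun H ->
  (forall s, H (- s) = H s /\ 0 <= H s) ->
  is_RInt_gen (fun s => s * H s) (at_point 0) (Rbar_locally p_infty) 1 ->
  (compact_support H \/ rapid_decay H) ->
  (forall x, continuous zeta x) ->
  bounded_fun zeta ->
  (exists x0, (forall x, zeta x0 <= zeta x) /\ 0 < zeta x0) ->
  piecewise_continuous psi0 ->
  bounded_fun psi0 ->
  is_solution H zeta psi0 u ->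
  forall t, 0 < t ->
    piecewise_continuous (fun x => u x t) /\
    (forall x, ~ continuous (fun y => u y t) x -> ~ continuous psi0 x).
Proof.
  intros hsmooth [Hb hHb] hsym _ hdecay hzeta _ [xm [hxm hzm]] hpsi _
    [hinit [hright [hstrip hsol]]] t ht.
  assert (hH : forall s, 0 <= H s <= Hb).
  { intros s. split; [apply hsym |]. eapply Rle_trans; [apply RRle_abs | apply hHb]. }
  destruct (second_moment_bound H Hb hH hdecay) as [M2 hM2].
  assert (hHcont : forall s, continuous H s).
  { intros s. apply (ex_derive_continuous (V := R_NormedModule)). exact (hsmooth 1%nat s). }
  destruct (hstrip t) as [Mu hMu].
  pose proof (solution_oscillation_dominated H zeta (zeta xm) Hb M2 hzm hxm hH hM2 hHcont hzeta
                u psi0 t Mu ht hMu hinit hright hsol) as hdom.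
  split.
  - exact (dominated_piecewise_continuous _ _ hdom hpsi).
  - intros x hdisc hcont. exact (hdisc (dominated_continuous _ _ hdom x hcont)).
Qed.
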